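(* Let $(S,d)$ be a metric space and let $P$ be a non-empty subset of $S$ with the induced metric. If $f\in\mathrm{BL}(P)$ and $g\in\mathrm{BL}(S)$ are such that $|f\vee g|_P|_L=|f|_L$ and $|f\vee g|_P|_L\ge|g|_L$, then $$\mathcal{E}^{S,0}_P(f\vee g|_P)\vee g=\mathcal{E}^{S,0}_P(f)\vee g.$$
   Context: $\mathrm{BL}(T)$ is the space of bounded real-valued Lipschitz functions on a metric space $T$, $|f|_L=\sup_{x\neq y}|f(x)-f(y)|/d(x,y)$ (with $|f|_L=0$ on a singleton), $\vee$ denotes pointwise maximum, and $g|_P$ is the restriction of $g$ to $P$. For $f\in\mathrm{BL}(P)$, $\mathcal{E}^{S,0}_P f(x)=\sup_{p\in P}[f(p)-|f|_L d(p,x)]$ for $x\in S$. *)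

From mathcomp Require Import all_boot all_order all_algebra.
From mathcomp Require Import all_classical all_reals.
Set Implicit Arguments. Unset Strict Implicit. Unset Printing Implicit Defensive.
Import Order.TTheory GRing.Theory Num.Theory.
Local Open Scope classical_set_scope.
Local Open Scope ring_scope.

Definition is_metric (R : realType) (S : Type) (d : S -> S -> R) : Prop :=
  (forall x y, 0 <= d x y) /\
  (forall x y, d x y = 0 <-> x = y) /\
  (forall x y, d x y = d y x) /\
  (forall x y z, d x z <= d x y + d y z).

(* f (a function on S, only its values on P matter) is in BL(P):
   bounded and Lipschitz on P for the induced metric *)
Definition BL (R : realType) (S : Type) (d : S -> S -> R) (P : set S)
  (f : S -> R) : Prop :=
  (exists M : R, forall x, P x -> `|f x| <= M) /\
  (exists C : R, forall x y, P x -> P y -> `|f x - f y| <= C * d x y).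

(* |f|_L on P = sup_{x <> y in P} |f x - f y| / d x y ; 0 if P has at most
   one point (0 is added to the set, which does not change the supremum
   otherwise since all ratios are nonnegative) *)
Definition lipnorm (R : realType) (S : Type) (d : S -> S -> R) (P : set S)
  (f : S -> R) : R :=
  sup ([set 0] `|` [set r | exists x y, [/\ P x, P y, x <> y &
                                          r = `|f x - f y| / d x y]]).

Definition ext0 (R : realType) (S : Type) (d : S -> S -> R) (P : set S)
  (f : S -> R) (x : S) : R :=
  sup [set f p - lipnorm d P f * d p x | p in P].

From mathcomp Require Import all_boot all_order all_algebra.
From mathcomp Require Import all_classical all_reals.
Set Implicit Arguments. Unset Strict Implicit. Unset Printing Implicit Defensive.
Import Order.TTheory GRing.Theory Num.Theory.
Local Open Scope classical_set_scope.
Local Open Scope ring_scope.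

(* Write L := |f|_L = |f v g|_P|_L.  Since max(a, b) - c = max(a - c, b - c),
   the extension of f v g|_P is the pointwise maximum of E(f)(x) and
   sup_p [g p - L d(p, x)].  The latter is at most g x because g is
   L-Lipschitz on the whole of S, so it is absorbed by the maximum with g. *)

Lemma sup_image_max (R : realType) (T : Type) (A : set T) (u v : T -> R) :
  A !=set0 -> has_ubound (u @` A) -> has_ubound (v @` A) ->
  sup [set Num.max (u p) (v p) | p in A] =
  Num.max (sup (u @` A)) (sup (v @` A)).
Proof.
move=> [p0 Ap0] ubu ubv.
have neu : u @` A !=set0 by exists (u p0), p0.
have nev : v @` A !=set0 by exists (v p0), p0.
have nemax : [set Num.max (u p) (v p) | p in A] !=set0.
  by exists (Num.max (u p0) (v p0)), p0.
have ubmax : has_ubound [set Num.max (u p) (v p) | p in A].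
  exists (Num.max (sup (u @` A)) (sup (v @` A))) => _ [p Ap <-].
  by apply: le_max2; apply: ub_le_sup => //; exists p.
apply/eqP; rewrite eq_le ge_max; apply/and3P; split.
- apply: ge_sup => // _ [p Ap <-].
  by apply: le_max2; apply: ub_le_sup => //; exists p.
- apply: ge_sup => // _ [p Ap <-].
  apply: (@le_trans _ _ (Num.max (u p) (v p))); first by rewrite le_max lexx.
  by apply: ub_le_sup => //; exists p.
- apply: ge_sup => // _ [p Ap <-].
  apply: (@le_trans _ _ (Num.max (u p) (v p))); first by rewrite le_max lexx orbT.
  by apply: ub_le_sup => //; exists p.
Qed.

Section MetricSpace.
Variables (R : realType) (S : Type) (d : S -> S -> R).
Hypothesis md : is_metric d.

Lemma metric_ge0 x y : 0 <= d x y.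
Proof. by case: md. Qed.

Lemma metric_gt0 x y : x <> y -> 0 < d x y.
Proof.
case: md => _ [dE _] nxy; rewrite lt_neqAle metric_ge0 andbT eq_sym.
by apply/eqP => /dE.
Qed.

Section Lipschitz.
Variables (A : set S) (g : S -> R).
Hypothesis g_lip : exists C : R, forall x y, A x -> A y -> `|g x - g y| <= C * d x y.

Let ratios := [set 0] `|` [set r | exists x y, [/\ A x, A y, x <> y &
                                    r = `|g x - g y| / d x y]].

Let ratios_ub : has_ubound ratios.
Proof.
case: g_lip => C gC; exists (Num.max 0 C) => _ [->|[x [y [Ax Ay nxy ->]]]].
  by rewrite le_max lexx.
by rewrite le_max; apply/orP; right; rewrite ler_pdivrMr ?metric_gt0 ?gC.
Qed.

Lemma lipnorm_ge0 : 0 <= lipnorm d A g.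
Proof. by apply: ub_le_sup ratios_ub _ _; left. Qed.

Lemma lipnorm_lipschitz x y : A x -> A y ->
  `|g x - g y| <= lipnorm d A g * d x y.
Proof.
move=> Ax Ay; have [<-|nxy] := pselect (x = y).
  by rewrite subrr normr0 mulr_ge0 ?lipnorm_ge0 ?metric_ge0.
rewrite -ler_pdivrMr ?metric_gt0 //.
by apply: ub_le_sup ratios_ub _ _; right; exists x, y.
Qed.

End Lipschitz.

Lemma has_ubound_sub_dist (A : set S) (u : S -> R) (M c : R) (x : S) :
  (forall p, A p -> u p <= M) -> 0 <= c ->
  has_ubound [set u p - c * d p x | p in A].
Proof.
move=> uM c0; exists M => _ [p Ap <-].
by rewrite lerBlDr (le_trans (uM p Ap)) // lerDl mulr_ge0 ?metric_ge0.
Qed.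

Lemma sub_dist_le_of_lipnorm (g : S -> R) (L : R) (p x : S) :
  (exists C : R, forall y z, setT y -> setT z -> `|g y - g z| <= C * d y z) ->
  lipnorm d setT g <= L -> g p - L * d p x <= g x.
Proof.
move=> g_lip gL.
have gpx : g p - g x <= lipnorm d setT g * d p x.
  exact: le_trans (ler_norm _) (lipnorm_lipschitz g_lip I I).
by rewrite lerBlDr -lerBlDl (le_trans gpx) // ler_wpM2r ?metric_ge0.
Qed.

End MetricSpace.

Theorem corollary4p4 (R : realType) (S : Type) (d : S -> S -> R)
  (P : set S) (f g : S -> R) :
  is_metric d -> P !=set0 ->
  BL d P f -> BL d setT g ->
  lipnorm d P (fun x => Num.max (f x) (g x)) = lipnorm d P f ->
  lipnorm d setT g <= lipnorm d P (fun x => Num.max (f x) (g x)) ->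
  forall x : S,
    Num.max (ext0 d P (fun y => Num.max (f y) (g y)) x) (g x) =
    Num.max (ext0 d P f x) (g x).
Proof.
move=> md P0 [[Mf fM] f_lip] [_ g_lip] EL gL x.
rewrite /ext0 EL in gL *; set L := lipnorm d P f in gL *.
have L0 : 0 <= L := lipnorm_ge0 md f_lip.
have -> : [set Num.max (f p) (g p) - L * d p x | p in P] =
          [set Num.max (f p - L * d p x) (g p - L * d p x) | p in P].
  by apply: eq_imagel => p _; rewrite addr_maxl.
have gx_ub : ubound [set g p - L * d p x | p in P] (g x).
  by move=> _ [p _ <-]; apply: sub_dist_le_of_lipnorm.
rewrite sup_image_max //; last 2 first.
- by apply: has_ubound_sub_dist => // p Pp; apply: le_trans (ler_norm _) (fM p Pp).
- by exists (g x).
have [p0 Pp0] := P0.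
by rewrite -maxA (max_r (ge_sup _ gx_ub)) //; exists (g p0 - L * d p0 x), p0.
Qed.
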